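(* For every graph $G$ and every minor-3-core $C$ of $G$, there is a minor-3-core of $G$ isomorphic to $C$ in which every vertex has the disjoint-paths property.
   Context: Graphs are simple and undirected. Contracting a vertex $u$ to a neighbour $v$ produces the graph with vertex set $V\setminus\{u\}$ and edge set consisting of all edges of $G$ not incident to $u$ together with all edges $\{u',v\}$ with $u'\neq v$ and $\{u',u\}\in E$. A minor of $G$ is a graph obtained from $G$ by vertex contractions and subgraph operations; thus the vertices of a minor are (non-contracted) vertices of $G$. A minor-3-core of $G$ is a minor $H$ of $G$ with minimum degree at least $3$ such that no minor of $G$ with minimum degree at least $3$ has more edges than $H$. For a minor-3-core $C$ of $G$, a vertex $v$ of $C$ has the disjoint-paths property for $C$ if, letting $u_1,\dots,u_{\Delta_C(v)}$ be the neighbours of $v$ in $C$, there are paths $\gamma_i$ in $G$ from $v$ to $u_i$ such that any two distinct paths $\gamma_i,\gamma_j$ share only the vertex $v$. *)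

From mathcomp Require Import all_boot.
Set Implicit Arguments. Unset Strict Implicit. Unset Printing Implicit Defensive.

(* A graph whose vertex set is a subset of T; edges are 2-element subsets. *)
Record sgraph (T : finType) := SGraph { sv : {set T}; se : {set {set T}} }.

Section Graphs.
Variable T : finType.

Definition graph_of (e : rel T) : sgraph T :=
  SGraph [set: T] [set [set x; y] | x in T, y in T & e x y].

Definition contract (G : sgraph T) (u v : T) : sgraph T :=
  SGraph (sv G :\ u)
    ([set f in se G | u \notin f]
       :|: [set [set u'; v] | u' in sv G & ([set u'; u] \in se G) && (u' != v)]).

Inductive minor_step (G H : sgraph T) : Prop :=
  | step_contract u v :
      u \in sv G -> v \in sv G -> [set u; v] \in se G ->
      H = contract G u v -> minor_step G H
  | step_subgraph :
      sv H \subset sv G -> se H \subset se G ->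
      (forall f, f \in se H -> f \subset sv H) -> minor_step G H.

Inductive is_minor (G : sgraph T) : sgraph T -> Prop :=
  | minor_refl : is_minor G G
  | minor_trans H K : is_minor G H -> minor_step H K -> is_minor G K.

Definition deg (H : sgraph T) (v : T) : nat := #|[set f in se H | v \in f]|.

Definition mindeg3 (H : sgraph T) : Prop :=
  forall v, v \in sv H -> 3 <= deg H v.

Definition minor3core (e : rel T) (C : sgraph T) : Prop :=
  [/\ is_minor (graph_of e) C, mindeg3 C &
      forall H, is_minor (graph_of e) H -> mindeg3 H -> #|se H| <= #|se C| ].

Definition sg_iso (C H : sgraph T) : Prop :=
  exists f : T -> T,
    [/\ {in sv C &, injective f}, f @: sv C = sv H &
        se H = [set f @: (x : {set T}) | x : {set T} in se C] ].

Definition disjoint_paths_prop (e : rel T) (C : sgraph T) (v : T) : Prop :=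
  exists p : T -> seq T,
    (forall u, [set v; u] \in se C ->
       [/\ path e v (p u), last v (p u) = u & uniq (v :: p u)]) /\
    (forall u u', [set v; u] \in se C -> [set v; u'] \in se C -> u != u' ->
       [disjoint p u & p u']).

End Graphs.

(* Represent the minor-3-core C of G by connected branch sets B x, x a vertex
   of C. It suffices to find in each B x a vertex r_x together with paths in B x
   from r_x to the branch sets of the neighbours of x that pairwise meet only at
   r_x: renaming every x to r_x gives an isomorphic minor-3-core, and extending
   these paths inside the neighbouring branch sets yields the disjoint paths.
   To find r_x, take a spanning tree of B x rooted at x, and a tree vertex c
   with smallest subtree among those whose subtree is attached to at least two
   neighbours of x. If the subtree of a child of c, or the part of B x outside
   the subtree of c, were also attached to two neighbours, cutting B x there
   into two branch sets would give a minor of minimum degree 3 with more edges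
   than C. Hence each of these regions reaches at most one neighbour of x, and
   r_x := c works with paths running through pairwise distinct regions. *)

From mathcomp Require Import all_boot zify.
Set Implicit Arguments. Unset Strict Implicit. Unset Printing Implicit Defensive.

Section SetFacts.
Variable T : finType.
Implicit Types (A B : {set T}) (p q r : T).

Lemma set2_eq p q r s : [set p; q] = [set r; s] -> (p = r /\ q = s) \/ (p = s /\ q = r).
Proof.
move=> E.
have /set2P [] : p \in [set r; s] by rewrite -E set21.
all: have /set2P [] : q \in [set r; s] by rewrite -E set22.
all: move=> qE pE; subst; auto.
- have : s \in [set r; r] by rewrite E set22.
  by case/set2P => ->; auto.
- have : r \in [set s; s] by rewrite E set21.
  by case/set2P => ->; auto.
Qed.

Lemma set2_inj p q q' : q != p -> [set p; q] = [set p; q'] -> q = q'.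
Proof. by move=> qp /set2_eq [[] | [_ qp']] //; rewrite qp' eqxx in qp. Qed.

Lemma cardsU_disjoint A B : [disjoint A & B] -> #|A :|: B| = #|A| + #|B|.
Proof. by move=> AB; apply/eqP; rewrite (leq_card_setU A B).2. Qed.

Lemma disjoint_by_pred A B (P : pred T) :
  (forall x, x \in A -> P x) -> (forall x, x \in B -> ~~ P x) -> [disjoint A & B].
Proof.
move=> AP BP; rewrite -setI_eq0; apply/eqP/setP => w; rewrite !inE.
by apply/negP => /andP [/AP wP /BP /negP].
Qed.

Lemma disjoint_seqS (s s' : seq T) A (A' : {set T}) :
  {subset s <= A} -> {subset s' <= A'} -> [disjoint A & A'] -> [disjoint s & s'].
Proof. by move=> /subsetP sA /subsetP sA' AA'; apply: disjointWl sA (disjointWr sA' AA'). Qed.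

End SetFacts.

Section Connectivity.
Variable T : finType.
Implicit Types (K : sgraph T) (S X Y Z W : {set T}).

Definition connected K Z :=
  forall S, S \subset Z -> S != set0 -> S != Z ->
  exists a b, [/\ a \in S, b \in Z :\: S & [set a; b] \in se K].

Lemma connected_set1 K x : connected K [set x].
Proof.
move=> S sS /set0Pn [w wS]; case/negP.
have /set1P wx := subsetP sS w wS.
by rewrite eqEsubset sS sub1set -wx.
Qed.

Lemma connected_cross K Z W S a b :
  connected K Z -> Z \subset W -> a \in S -> a \in Z -> b \in Z -> b \notin S ->
  exists a' b', [/\ a' \in S, b' \in W :\: S & [set a'; b'] \in se K].
Proof.
move=> cZ sZW aS aZ bZ bS.
have [|| a' [b' [/setIP [a'S _]]]] := cZ (S :&: Z) (subsetIr _ _).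
- by apply/set0Pn; exists a; rewrite inE aS.
- by apply: contraNneq bS => E; move: bZ; rewrite -E => /setIP [].
rewrite !inE negb_and => /andP [/orP [b'S | b'Z] b'Z'] E; last by rewrite b'Z' in b'Z.
by exists a', b'; rewrite inE b'S (subsetP sZW).
Qed.

Lemma connected_setU K X Y a c :
  connected K X -> connected K Y -> a \in X -> c \in Y -> [set a; c] \in se K ->
  connected K (X :|: Y).
Proof.
move=> cX cY aX cY' acK S sS /set0Pn [w wS] SnXY.
have /properP [_ [w' w'XY w'S]] : S \proper X :|: Y by rewrite properEneq SnXY.
have sX := subsetUl X Y; have sY := subsetUr X Y.
have wXY := subsetP sS w wS.
case: (boolP (a \in S)) => aS; case: (boolP (c \in S)) => cS.
- case/setUP: w'XY => [w'X | w'Y].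
  + exact: connected_cross cX sX aS aX w'X w'S.
  + exact: connected_cross cY sY cS cY' w'Y w'S.
- by exists a, c; rewrite inE cS (subsetP sY).
- by exists c, a; rewrite inE aS (subsetP sX a aX) setUC.
- case/setUP: wXY => [wX | wY].
  + exact: connected_cross cX sX wS wX aX aS.
  + exact: connected_cross cY sY wS wY cY' cS.
Qed.

Lemma edge_contract_kept K u v a c :
  [set a; c] \in se K -> a != u -> c != u -> [set a; c] \in se (contract K u v).
Proof.
move=> acK au cu; rewrite in_setU inE acK in_set2.
by rewrite !(eq_sym u) (negbTE au) (negbTE cu).
Qed.

Lemma edge_contract_moved K u v a :
  a \in sv K -> [set a; u] \in se K -> a != v -> [set a; v] \in se (contract K u v).
Proof.
move=> aK auK av; rewrite in_setU; apply/orP; right.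
by apply: imset_f; rewrite inE aK auK av.
Qed.

Lemma connected_contract K Z u v :
  connected K Z -> Z \subset sv K -> (u \in Z -> v \in Z /\ u != v) ->
  connected (contract K u v) (Z :\ u).
Proof.
move=> connZ sZK uZv S sSZ /set0Pn [a0 a0S] SnZ.
have /properP [_ [w0 /setD1P [w0u w0Z] w0S]] : S \proper Z :\ u by rewrite properEneq SnZ.
have uS : u \notin S by apply/negP => /(subsetP sSZ); rewrite !inE eqxx.
have sSZ' : S \subset Z := subset_trans sSZ (subsetDl Z [set u]).
have neq_u w : w \in S -> w != u by move=> wS; apply: contraNneq uS => <-.
have a0Z := subsetP sSZ' a0 a0S.
case: (boolP (u \in Z)) => uZ; last first.
  have [a [c [aS /setDP [cZ cS] acK]]] := connected_cross connZ (subxx Z) a0S a0Z w0Z w0S.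
  have cu : c != u by apply: contraNneq uZ => <-.
  exists a, c; split => //; first by rewrite !inE cS cZ cu.
  exact: edge_contract_kept acK (neq_u a aS) cu.
have [vZ uv] := uZv uZ.
case: (boolP (v \in S)) => vS.
- have uS' : u \in u |: S := setU11 u S.
  have w0S' : w0 \notin u |: S by rewrite in_setU1 negb_or w0u.
  have [a [c [/setU1P aS /setDP [cZ]]]] := connected_cross connZ (subxx Z) uS' uZ w0Z w0S'.
  rewrite in_setU1 negb_or => /andP [cu cS] acK.
  have cZu : c \in (Z :\ u) :\: S by rewrite !inE cS cu cZ.
  case: aS => [au | aS]; last first.
    by exists a, c; split => //; exact: edge_contract_kept acK (neq_u a aS) cu.
  exists v, c; split => //; rewrite setUC edge_contract_moved ?(subsetP sZK) //.
    by rewrite setUC -au.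
  by apply: contraNneq cS => ->.
- have [a [c [aS /setDP [cZ cS] acK]]] := connected_cross connZ (subxx Z) a0S a0Z vZ vS.
  case: (eqVneq c u) => [cu | cu].
    exists a, v; split => //; first by rewrite !inE vS vZ eq_sym uv.
    apply: edge_contract_moved; rewrite -?cu //; first exact: subsetP sZK a (subsetP sSZ' a aS).
    by apply: contraNneq vS => <-.
  exists a, c; split => //; first by rewrite !inE cS cZ cu.
  exact: edge_contract_kept acK (neq_u a aS) cu.
Qed.

End Connectivity.

Section Models.
Variable T : finType.
Implicit Types (K H : sgraph T) (U : {set T}) (b : T -> T).

Definition branch U b (x : T) := [set w in U | b w == x].

(* The branch sets [branch U b x] of the vertices [x] of [H] partition [U];
   since minors keep the names of their vertices, [x] lies in its own branch set. *)
Record model K H U b : Prop := Model {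
  model_sub : U \subset sv K;
  model_label : forall w, w \in U -> b w \in sv H;
  model_root : forall x, x \in sv H -> x \in U /\ b x = x;
  model_connected : forall x, x \in sv H -> connected K (branch U b x);
  model_edge : forall f, f \in se H -> exists a c,
    [/\ a \in U, c \in U, b a != b c, [set a; c] \in se K & f = [set b a; b c]] }.

Lemma mem_branch U b x w : (w \in branch U b x) = (w \in U) && (b w == x).
Proof. by rewrite inE. Qed.

Lemma branchP U b x w : w \in branch U b x -> w \in U /\ b w = x.
Proof. by rewrite inE => /andP [? /eqP]. Qed.

Lemma branch_disjoint U b x y : x != y -> [disjoint branch U b x & branch U b y].
Proof.
move=> xy; apply: (disjoint_by_pred (P := fun w => b w == x)) => w /branchP [_ ->] //.
by rewrite eq_sym.
Qed.

Lemma model_edge_branch K H U b x y : model K H U b -> [set x; y] \in se H ->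
  exists a c, [/\ a \in branch U b x, c \in branch U b y, x != y & [set a; c] \in se K].
Proof.
move=> MK /(model_edge MK) [a [c [aU cU bac acK /set2_eq [[-> ->] | [-> ->]]]]].
  by exists a, c; rewrite !mem_branch aU cU !eqxx.
by exists c, a; rewrite !mem_branch aU cU !eqxx setUC eq_sym.
Qed.

Lemma model_subgraph K H U b :
  model K H U b -> {in U, forall w, b w = w} -> minor_step K H.
Proof.
move=> MK idU; apply: step_subgraph.
- by apply/subsetP => x /(model_root MK) [xU _]; apply: (subsetP (model_sub MK)).
- by apply/subsetP => f /(model_edge MK) [a [c [aU cU _ acK ->]]]; rewrite !idU.
- move=> f /(model_edge MK) [a [c [aU cU _ _ ->]]].
  by rewrite subUset !sub1set !(model_label MK).
Qed.

Lemma model_branch_edge K H U b w : model K H U b -> w \in U -> b w != w ->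
  exists2 p, p \in branch U b (b w) :\ w & [set w; p] \in se K.
Proof.
move=> MK wU bw; have xH := model_label MK wU; have [xU bx] := model_root MK xH.
have [||| w' [p [/set1P -> pB wpK]]] := model_connected MK xH (_ : [set w] \subset _).
- by rewrite sub1set mem_branch wU eqxx.
- by apply/set0Pn; exists w; rewrite set11.
- apply: contraNneq bw => E.
  by have /set1P /eqP : b w \in [set w] by rewrite E mem_branch xU bx eqxx.
- by exists p.
Qed.

Lemma model_contract K H U b w : model K H U b -> w \in U -> b w != w ->
  exists p, [/\ w \in sv K, p \in sv K, [set w; p] \in se K &
                model (contract K w p) H (U :\ w) b].
Proof.
move=> MK wU bw; have [p /setD1P [pw /branchP [pU bp]] wpK] := model_branch_edge MK wU bw.
have sUK := model_sub MK.
exists p; split; rewrite ?(subsetP sUK) //.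
split.
- exact: setSD.
- by move=> z /setD1P [_ /(model_label MK)].
- move=> y yH; have [yU byy] := model_root MK yH; split => //.
  by rewrite !inE yU andbT; apply: contraNneq bw => <-; rewrite byy.
- move=> y yH.
  have -> : branch (U :\ w) b y = branch U b y :\ w.
    by apply/setP => z; rewrite !inE andbA [(z != w) && _]andbC.
  apply: connected_contract (model_connected MK yH) _ _.
    by apply/subsetP => z /branchP [/(subsetP sUK)].
  by move=> /branchP [_ bwy]; rewrite mem_branch pU bp bwy eqxx eq_sym.
- move=> f /(model_edge MK) [a [c [aU cU bac acK ->]]].
  wlog cw : a c aU cU bac acK / c != w.
    move=> sym; have [cw | ] := eqVneq c w; last exact: sym.
    have aw : a != w by apply: contraNneq bac => ->; rewrite cw.
    by rewrite setUC; apply: (sym c a) => //; [rewrite eq_sym | rewrite setUC].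
  have [aw | aw] := eqVneq a w.
  + have cp : c != p by apply: contraNneq bac => ->; rewrite aw bp.
    exists p, c; split.
    * by rewrite !inE pw pU.
    * by rewrite !inE cw cU.
    * by rewrite bp -aw.
    * rewrite setUC; apply: edge_contract_moved => //; first exact: subsetP sUK c cU.
      by rewrite setUC -aw.
    * by rewrite bp aw.
  + exists a, c; split => //; [by rewrite !inE aw aU | by rewrite !inE cw cU |].
    exact: edge_contract_kept.
Qed.

Lemma model_is_minor K0 K H U b : is_minor K0 K -> model K H U b -> is_minor K0 H.
Proof.
have [n] := ubnP #|U|; elim: n K U => // n IH K U szU mK MK.
case: (boolP [exists w in U, b w != w]) => [/exists_inP [w wU bw] | /exists_inPn idU].
- have [p [wK pK wpK MK']] := model_contract MK wU bw.
  apply: IH (minor_trans mK (step_contract wK pK wpK erefl)) MK'.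
  by rewrite (cardsD1 w U) wU in szU.
- apply: minor_trans mK (model_subgraph MK _) => w /idU.
  by rewrite negbK => /eqP.
Qed.

Definition relabel b u v (w : T) := if b w == u then v else b w.

Lemma branch_relabel U b u v x : x != u ->
  branch U (relabel b u v) x =
    if x == v then branch U b u :|: branch U b x else branch U b x.
Proof.
move=> xu; apply/setP => w; rewrite /relabel; case: ifP => [/eqP -> | xv].
  by rewrite !inE -andb_orr; case: (b w == u); rewrite ?eqxx.
rewrite !inE; case: (eqVneq (b w) u) => [-> | //].
by rewrite eq_sym xv eq_sym (negbTE xu).
Qed.

Lemma model_contract_step K H U b u v : model K H U b -> [set u; v] \in se H ->
  model K (contract H u v) U (relabel b u v).
Proof.
move=> MK uvH; have [a0 [c0 [a0u c0v uv a0c0K]]] := model_edge_branch MK uvH.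
have [[a0U ba0] [c0U bc0]] := (branchP a0u, branchP c0v).
have vH : v \in sv H by rewrite -bc0 (model_label MK).
have relabelE w : b w != u -> relabel b u v w = b w by rewrite /relabel => /negbTE ->.
split; first exact: model_sub MK.
- move=> w wU; rewrite /relabel; case: (eqVneq (b w) u) => [_ | bwu]; rewrite !inE.
    by rewrite eq_sym uv vH.
  by rewrite bwu (model_label MK).
- move=> x /setD1P [xu xH]; have [xU bx] := model_root MK xH.
  by rewrite relabelE bx.
- move=> x /setD1P [xu xH]; rewrite branch_relabel //.
  case: eqP => [xv | _]; last exact (model_connected MK xH).
  have uH : u \in sv H by rewrite -ba0 (model_label MK).
  by apply: connected_setU (model_connected MK uH) (model_connected MK xH) a0u _ a0c0K; rewrite xv.
- move=> f /setUP [/setIdP [/(model_edge MK) [a [c [aU cU bac acK fE]]] uf] | ].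
    have bau : b a != u by apply: contraNneq uf => <-; rewrite fE set21.
    have bcu : b c != u by apply: contraNneq uf => <-; rewrite fE set22.
    by exists a, c; rewrite !relabelE.
  case/imsetP => u' /setIdP [u'H /andP [u'uH u'v]] ->.
  have [a [c [/branchP [aU ba] /branchP [cU bc] u'u acK]]] := model_edge_branch MK u'uH.
  exists a, c; rewrite relabelE ba // /relabel bc eqxx; split => //.
Qed.

Lemma model_subgraph_step K H H' U b : model K H U b ->
  sv H' \subset sv H -> se H' \subset se H -> (forall f, f \in se H' -> f \subset sv H') ->
  model K H' [set w in U | b w \in sv H'] b.
Proof.
move=> MK /subsetP svH' /subsetP seH' endsH'.
have branchE x : x \in sv H' -> branch [set w in U | b w \in sv H'] b x = branch U b x.
  by move=> xH'; apply/setP => w; rewrite !inE; case: eqP => [-> | _]; rewrite ?xH' ?andbT ?andbF.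
split.
- by apply: subset_trans (model_sub MK); apply/subsetP => w /setIdP [].
- by move=> w /setIdP [].
- move=> x xH'; have [xU bx] := model_root MK (svH' x xH').
  by rewrite inE xU bx.
- by move=> x xH'; rewrite branchE //; apply: model_connected (svH' x xH').
- move=> f fH'; have [a [c [aU cU bac acK fE]]] := model_edge MK (seH' f fH').
  have /subsetP sf := endsH' f fH'.
  by exists a, c; rewrite !inE aU cU !sf // fE ?set21 ?set22.
Qed.

Lemma card_le_deg K v (F : {set {set T}}) :
  F \subset se K -> (forall f, f \in F -> v \in f) -> #|F| <= deg K v.
Proof.
move=> /subsetP sF vF; apply/subset_leq_card/subsetP => f fF.
by rewrite inE sF // vF.
Qed.

Definition image_graph (f : T -> T) K :=
  SGraph (f @: sv K) [set f @: (F : {set T}) | F in se K].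

Section ImageGraph.
Variables (f : T -> T) (K : sgraph T).
Hypotheses (finj : {in sv K &, injective f}) (ends : forall F, F \in se K -> F \subset sv K).

Lemma image_graph_iso : sg_iso K (image_graph f K).
Proof. by exists f. Qed.

Lemma image_edge_inj : {in se K &, injective (fun F : {set T} => f @: F)}.
Proof.
move=> F F' /ends /subsetP sF /ends /subsetP sF' E; apply/setP => z.
suff sub (A A' : {set T}) : {subset A <= sv K} -> {subset A' <= sv K} -> f @: A = f @: A' ->
    z \in A -> z \in A'.
  by apply/idP/idP; apply: sub.
move=> sA sA' EA zA; have /imsetP [z' z'A' fz] : f z \in f @: A' by rewrite -EA imset_f.
by rewrite (finj (sA z zA) (sA' z' z'A') fz).
Qed.

Lemma card_image_graph : #|se (image_graph f K)| = #|se K|.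
Proof. exact: card_in_imset image_edge_inj. Qed.

Lemma deg_image_graph x : deg K x <= deg (image_graph f K) (f x).
Proof.
rewrite /deg -(card_in_imset (f := fun F : {set T} => f @: F) (D := [set F in se K | x \in F])).
  apply/subset_leq_card/subsetP => _ /imsetP [F /setIdP [FK xF] ->].
  by rewrite inE !imset_f.
by move=> F F' /setIdP [FK _] /setIdP [F'K _]; apply: image_edge_inj.
Qed.

End ImageGraph.

End Models.

Section GraphOf.
Variables (T : finType) (e : rel T).
Hypotheses (esym : symmetric e) (eirr : irreflexive e).
Local Notation G := (graph_of e).
Implicit Types (A S Z : {set T}).

Lemma se_graph_of a b : ([set a; b] \in se G) = e a b.
Proof.
apply/imset2P/idP => [[x y _] /[!inE] /andP [_ exy] E | eab]; last first.
  by exists a b; rewrite ?inE.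
by have [[-> ->] | [-> ->]] := set2_eq E; rewrite // esym.
Qed.

Definition rooted_tree Z (r : T) (par : T -> T) (h : T -> nat) :=
  forall w, w \in Z -> w != r -> [/\ par w \in Z, e w (par w) & h (par w) < h w].

Lemma rooted_tree_exit Z A r par h w0 :
  rooted_tree Z r par h -> A \subset Z -> w0 \in A -> r \notin A ->
  exists2 w, w \in A & par w \in Z :\: A /\ e w (par w).
Proof.
move=> tree sAZ w0A rA.
have [w wA wmin] := arg_minnP h w0A.
have wr : w != r by apply: contraNneq rA => <-.
have [parZ ew hlt] := tree w (subsetP sAZ w wA) wr.
exists w => //; rewrite inE parZ andbT; split => //.
by apply: contraTN hlt => /wmin; rewrite -leqNgt.
Qed.

Lemma rooted_tree_connected Z r par h :
  r \in Z -> rooted_tree Z r par h -> connected G Z.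
Proof.
move=> rZ tree S sSZ /set0Pn [w0 w0S] SnZ.
have /properP [_ [w1 w1Z w1S]] : S \proper Z by rewrite properEneq SnZ.
case: (boolP (r \in S)) => rS.
- have rZS : r \notin Z :\: S by rewrite inE rS.
  have w1ZS : w1 \in Z :\: S by rewrite inE w1S.
  have [w /setDP [wZ wS] [parZS ew]] := rooted_tree_exit tree (subsetDl Z S) w1ZS rZS.
  have parS : par w \in S.
    by move: parZS; rewrite !inE; case: (par w \in S); case: (par w \in Z).
  exists (par w), w; split => //; first by rewrite inE wS.
  by rewrite se_graph_of esym.
- have [w wS [parZS ew]] := rooted_tree_exit tree sSZ w0S rS.
  by exists w, (par w); rewrite se_graph_of.
Qed.

Lemma rooted_tree_grow S r par h a b :
  rooted_tree S r par h -> a \in S -> b \notin S -> e b a ->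
  rooted_tree (b |: S) r (fun w => if w == b then a else par w)
                         (fun w => if w == b then (h a).+1 else h w).
Proof.
move=> tree aS bS eba w /setU1P [-> _ | wS wr].
  have ab : a != b by apply: contraNneq bS => <-.
  by rewrite eqxx (negbTE ab) setU1r.
have wb : w != b by apply: contraNneq bS => <-.
have [parS ew hlt] := tree w wS wr.
have parb : par w != b by apply: contraNneq bS => <-.
by rewrite (negbTE wb) (negbTE parb) setU1r.
Qed.

Lemma connected_rooted_tree Z r : connected G Z -> r \in Z ->
  exists par h, par r = r /\ rooted_tree Z r par h.
Proof.
move=> connZ rZ.
suff grow n S : #|Z :\: S| < n -> r \in S -> S \subset Z ->
    (exists par h, par r = r /\ rooted_tree S r par h) ->
    exists par h, par r = r /\ rooted_tree Z r par h.
  apply: (grow _ [set r] (ltnSn _) (set11 r)); first by rewrite sub1set.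
  by exists id, (fun=> 0); split => // w /set1P ->; rewrite eqxx.
elim: n S => [//|n IH] S szS rS sSZ [par [h [parr tree]]].
have [<- | SnZ] := eqVneq S Z; first by exists par, h.
have Sn0 : S != set0 by apply/set0Pn; exists r.
have [a [b [aS /setDP [bZ bS] eab]]] := connZ S sSZ Sn0 SnZ.
rewrite se_graph_of esym in eab.
have br : b != r by apply: contraNneq bS => ->.
apply: (IH (b |: S)); rewrite ?setU1r ?subUset ?sub1set ?bZ //.
- have -> : Z :\: (b |: S) = (Z :\: S) :\ b.
    by apply/setP => w; rewrite !inE negb_or andbA.
  by move: szS; rewrite (cardsD1 b (Z :\: S)) inE bS bZ.
- exists (fun w => if w == b then a else par w), (fun w => if w == b then (h a).+1 else h w).
  by rewrite eq_sym (negbTE br); split => //; exact: rooted_tree_grow.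
Qed.

Lemma connected_path Z t w : connected G Z -> t \in Z -> w \in Z ->
  exists p, [/\ path e t p, last t p = w, uniq (t :: p) & {subset p <= Z}].
Proof.
move=> connZ tZ wZ.
pose eZ a b := e a b && (b \in Z).
have : w \in [set v in Z | connect eZ t v].
  set R := [set v in Z | _]; have [-> // | RnZ] := eqVneq R Z.
  have sRZ : R \subset Z by apply/subsetP => v /setIdP [].
  have Rn0 : R != set0 by apply/set0Pn; exists t; rewrite inE tZ connect0.
  have [a [b [/setIdP [_ ta] /setDP [bZ bR]]]] := connZ R sRZ Rn0 RnZ.
  rewrite se_graph_of => eab; move: bR; rewrite inE bZ /=.
  by rewrite (connect_trans ta) // connect1 // /eZ eab.
case/setIdP=> _ /connectP [p pp ->].
have [q qp uq _] := shortenP pp.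
exists q; split => //; first by apply: sub_path qp => a b /andP [].
elim: q {uq} (t) qp => [// | c q IH] t' /= /andP [/andP [_ cZ] qp] v.
by rewrite inE => /predU1P [-> // | /(IH _ qp)].
Qed.

Lemma model_graph_of : model G G setT id.
Proof.
split => //.
- move=> x _; have -> : branch setT id x = [set x] by apply/setP => w; rewrite !inE.
  exact: connected_set1.
- move=> f /imset2P [x y _ /[!inE] exy ->].
  have xy : x != y by apply: contraTneq exy => ->; rewrite eirr.
  by exists x, y; rewrite se_graph_of.
Qed.

Lemma minor_model H : is_minor G H -> exists U b, model G H U b.
Proof.
elim=> [|H1 H2 _ [U [b MH1]] [u v _ _ uvH -> | svH seH endsH]].
- by exists setT, id; exact: model_graph_of.
- by exists U, (relabel b u v); exact: model_contract_step.
- by exists [set w in U | b w \in sv H2], b; exact: model_subgraph_step MH1 svH seH endsH.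
Qed.

End GraphOf.

Section Core.
Variables (T : finType) (e : rel T).
Hypothesis esym : symmetric e.
Local Notation G := (graph_of e).
Variables (C : sgraph T) (U : {set T}) (b : T -> T).
Hypotheses (MC : model G C U b) (mdC : mindeg3 C)
           (maxC : forall H, is_minor G H -> mindeg3 H -> #|se H| <= #|se C|).
Local Notation B := (branch U b).
Implicit Types (Z : {set T}).

Definition nbhd x := [set y in sv C | [set x; y] \in se C].

Definition attached x Z :=
  [set y in nbhd x | [exists w in Z, exists z in B y, e w z]].

Lemma root_in_branch x : x \in sv C -> x \in B x.
Proof. by move=> /(model_root MC) [xU bx]; rewrite mem_branch xU bx eqxx. Qed.

Lemma edge_ends f : f \in se C ->
  exists x y, [/\ x \in sv C, y \in sv C, x != y & f = [set x; y]].
Proof.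
move=> /(model_edge MC) [a [c [aU cU bac _ ->]]].
by exists (b a), (b c); rewrite !(model_label MC).
Qed.

Lemma edge_subset f : f \in se C -> f \subset sv C.
Proof. by move=> /edge_ends [x [y [xC yC _ ->]]]; rewrite subUset !sub1set xC yC. Qed.

Lemma nbhd_sv x y : y \in nbhd x -> y \in sv C.
Proof. by case/setIdP. Qed.

Lemma nbhd_neq x y : y \in nbhd x -> y != x.
Proof. by case/setIdP => _ /(model_edge_branch MC) [a [c [_ _ xy _]]]; rewrite eq_sym. Qed.

Lemma edge_at x f : f \in se C -> x \in f -> exists2 y, y \in nbhd x & f = [set x; y].
Proof.
move=> fC; have [p [q [pC qC _ fE]]] := edge_ends fC.
rewrite fE => /set2P [-> | ->].
- by exists q; rewrite // inE qC -fE.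
- by exists p; [rewrite inE pC setUC -fE | rewrite setUC].
Qed.

Lemma deg_le_nbhd x : deg C x <= #|nbhd x|.
Proof.
apply: leq_trans (leq_imset_card (fun y => [set x; y]) (nbhd x)).
apply/subset_leq_card/subsetP => f /setIdP [fC xf].
by have [y yN ->] := edge_at fC xf; apply: imset_f.
Qed.

Lemma nbhd_attached x y : y \in nbhd x -> y \in attached x (B x).
Proof.
move=> yN; rewrite inE yN; case/setIdP: yN => _ /(model_edge_branch MC) [w [z [wB zB _]]].
by rewrite se_graph_of // => ewz; apply/exists_inP; exists w => //; apply/exists_inP; exists z.
Qed.

Lemma attached_nbhd x Z y : y \in attached x Z -> y \in nbhd x.
Proof. by case/setIdP. Qed.

Lemma attached_branch x : attached x (B x) = nbhd x.
Proof.
apply/eqP; rewrite eqEsubset; apply/andP; split; apply/subsetP => y.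
  exact: attached_nbhd.
exact: nbhd_attached.
Qed.

Lemma attached_setU x Z (Z' : {set T}) :
  attached x (Z :|: Z') = attached x Z :|: attached x Z'.
Proof.
apply/setP => y; rewrite !inE -andb_orr; congr (_ && _).
apply/exists_inP/orP => [[w /setUP [] wZ ex] | [] /exists_inP [w wZ ex]].
- by left; apply/exists_inP; exists w.
- by right; apply/exists_inP; exists w.
- by exists w; rewrite // inE wZ.
- by exists w; rewrite // inE wZ orbT.
Qed.

Section Split.
Variables (x c : T) (X : {set T}).
Hypotheses (xC : x \in sv C) (sXB : X \subset B x) (xX : x \notin X) (cX : c \in X)
           (connX : connected G X) (connY : connected G (B x :\: X)).
Local Notation Y := (B x :\: X).

Definition split_label w := if w \in X then c else b w.

Definition split_kept := [set f in se C | x \notin f].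
Definition split_edgesY := [set [set x; y] | y in attached x Y].
Definition split_edgesX := [set [set c; y] | y in attached x X].

(* [x] keeps the part [Y] of its branch set, and [X] becomes the branch set of
   the new vertex [c]: the edges at [x] are shared out and [xc] is gained. *)
Definition split_graph := SGraph (c |: sv C)
  (split_kept :|: (split_edgesY :|: (split_edgesX :|: [set [set x; c]]))).

Lemma split_branchP w : w \in X -> w \in U /\ b w = x.
Proof. by move/(subsetP sXB)/branchP. Qed.

Lemma split_root_notin : c \notin sv C.
Proof.
apply/negP => /(model_root MC) [_]; have [_ ->] := split_branchP cX.
by move=> xc; move: xX; rewrite xc cX.
Qed.

Lemma split_root_neq : c != x.
Proof. by apply: contraNneq xX => <-. Qed.

Lemma split_root_neq_nbhd y : y \in nbhd x -> c != y.
Proof. by move/nbhd_sv; apply: contraTneq => <-; apply: split_root_notin. Qed.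

Lemma split_root_notin_edge f : f \in se C -> c \notin f.
Proof. by move=> fC; apply: contra split_root_notin => /(subsetP (edge_subset fC)). Qed.

Lemma branch_notin_split z y : z \in B y -> y != x -> z \notin X.
Proof. by move=> /branchP [_ <-]; apply: contra => /split_branchP [_ ->]. Qed.

Lemma split_labelE w : w \notin X -> split_label w = b w.
Proof. by rewrite /split_label => /negbTE ->. Qed.

Lemma branch_split_root : branch U split_label c = X.
Proof.
apply/setP => w; rewrite mem_branch /split_label.
case: ifP => [wX | _]; first by rewrite eqxx andbT; case: (split_branchP wX).
apply/negbTE/andP => [[wU /eqP bwc]].
by move: split_root_notin; rewrite -bwc (model_label MC wU).
Qed.

Lemma branch_split z : z \in sv C ->
  branch U split_label z = if z == x then Y else B z.
Proof.
move=> zC; apply/setP => w; rewrite /split_label.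
case: eqP => [-> | /eqP zx]; rewrite !inE; case: (boolP (w \in X)) => wX //=.
- by rewrite (negbTE split_root_neq) andbF.
- have [_ ->] := split_branchP wX; have cz : c != z by apply: contraNneq split_root_notin => ->.
  by rewrite (negbTE cz) eq_sym (negbTE zx).
Qed.

Lemma attached_edge Z y : y \in attached x Z -> Z \subset B x ->
  exists w z, [/\ w \in Z, z \in U, z \notin X, b z = y & [set w; z] \in se G].
Proof.
case/setIdP => yN /exists_inP [w wZ /exists_inP [z zy ewz]] _.
have [zU bz] := branchP zy.
by exists w, z; rewrite se_graph_of // (branch_notin_split zy) ?nbhd_neq.
Qed.

Lemma split_model : model G split_graph U split_label.
Proof.
have YU w : w \in Y -> [/\ w \in U, w \notin X & split_label w = x].
  by case/setDP => /branchP [wU bw] wX; rewrite split_labelE.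
have XU w : w \in X -> w \in U /\ split_label w = c.
  by move=> wX; rewrite /split_label wX; case: (split_branchP wX).
split => //.
- exact: subsetT.
- move=> w wU; rewrite /split_label in_setU1; case: ifP => _; first by rewrite eqxx.
  by rewrite (model_label MC wU) orbT.
- move=> z /setU1P [-> | zC]; first exact: XU.
  have [zU bz] := model_root MC zC; rewrite split_labelE ?bz //.
  by apply: contra xX => zX; have [_ <-] := split_branchP zX; rewrite bz.
- move=> z /setU1P [-> | zC]; first by rewrite branch_split_root.
  by rewrite branch_split //; case: eqP => _ //; exact (model_connected MC zC).
move=> f; rewrite !in_setU.
case/or4P => [/setIdP [fC xf] | /imsetP [y yN ->] | /imsetP [y yN ->] | /set1P ->].
- have [a [a' [aU a'U baa' aa'K fE]]] := model_edge MC fC.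
  have ax : b a != x by apply: contraNneq xf => <-; rewrite fE set21.
  have a'x : b a' != x by apply: contraNneq xf => <-; rewrite fE set22.
  have aX : a \notin X by apply: (branch_notin_split (y := b a)); rewrite // mem_branch aU eqxx.
  have a'X : a' \notin X by apply: (branch_notin_split (y := b a')); rewrite // mem_branch a'U eqxx.
  by exists a, a'; rewrite !split_labelE.
- have [w [z [wY zU zX bz wzG]]] := attached_edge yN (subsetDl _ _).
  have [wU wX lw] := YU w wY.
  by exists w, z; rewrite lw split_labelE // bz eq_sym nbhd_neq // (attached_nbhd yN).
- have [w [z [wX zU zX bz wzG]]] := attached_edge yN sXB.
  have [wU lw] := XU w wX.
  by exists w, z; rewrite lw split_labelE // bz split_root_neq_nbhd // (attached_nbhd yN).
- have [||a [a' [aX a'Y aa'G]]] := model_connected MC xC sXB.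
  + by apply/set0Pn; exists c.
  + by apply: contraNneq xX => ->; apply: root_in_branch.
  have [a'U a'X la'] := YU a' a'Y; have [aU la] := XU a aX.
  by exists a', a; rewrite la la' eq_sym split_root_neq setUC.
Qed.

Lemma nbhd_split y : y \in nbhd x -> y \in attached x X :|: attached x Y.
Proof.
have BxE : B x = X :|: Y by rewrite -{1}(setID (B x) X) (setIidPr sXB).
by rewrite -attached_setU -BxE; apply: nbhd_attached.
Qed.

Lemma card_split_edgesY : #|split_edgesY| = #|attached x Y|.
Proof.
by apply: card_in_imset => y y' /attached_nbhd /nbhd_neq yx _; apply: set2_inj.
Qed.

Lemma card_split_edgesX : #|split_edgesX| = #|attached x X|.
Proof.
apply: card_in_imset => y y' /attached_nbhd /nbhd_sv yC _; apply: set2_inj.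
by apply: contraNneq split_root_notin => <-.
Qed.

Lemma disjoint_split_edgesX : [disjoint split_edgesX & [set [set x; c]]].
Proof.
apply: (disjoint_by_pred (P := fun f : {set T} => x \notin f)) => [f | f /set1P ->].
  case/imsetP => y /attached_nbhd /nbhd_neq yx ->.
  by rewrite /= in_set2 negb_or !(eq_sym x) split_root_neq.
by rewrite /= set21.
Qed.

Lemma disjoint_split_edgesY : [disjoint split_edgesY & [set [set x; c]]].
Proof.
apply: (disjoint_by_pred (P := fun f : {set T} => c \notin f)) => [f | f /set1P ->].
  case/imsetP => y /attached_nbhd yN ->.
  by rewrite /= in_set2 negb_or split_root_neq split_root_neq_nbhd.
by rewrite /= set22.
Qed.

Lemma card_split_graph :
  #|se split_graph| = #|split_kept| + (#|attached x Y| + (#|attached x X| + 1)).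
Proof.
have kept_rest : [disjoint split_kept & split_edgesY :|: (split_edgesX :|: [set [set x; c]])].
  apply: (disjoint_by_pred (P := fun f : {set T} => (x \notin f) && (c \notin f))).
    by move=> f /setIdP [fC ->]; rewrite split_root_notin_edge.
  move=> f; rewrite !in_setU => /or3P [/imsetP [y _ ->] | /imsetP [y _ ->] | /set1P ->];
    by rewrite /= ?set21 ?set22 /= ?andbF.
have Y_rest : [disjoint split_edgesY & split_edgesX :|: [set [set x; c]]].
  apply: (disjoint_by_pred (P := fun f : {set T} => c \notin f)).
    move=> _ /imsetP [y /attached_nbhd yN ->].
    by rewrite /= in_set2 negb_or split_root_neq split_root_neq_nbhd.
  by move=> f /setUP [/imsetP [y _ ->] | /set1P ->]; rewrite /= ?set21 ?set22.
rewrite /= !cardsU_disjoint ?disjoint_split_edgesX // cards1.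
by rewrite card_split_edgesX card_split_edgesY.
Qed.

Lemma split_deg v : v \in sv C -> v != x -> deg C v <= deg split_graph v.
Proof.
move=> vC vx.
have edge_xv f : f \in se C -> v \in f -> x \in f -> f = [set x; v] /\ v \in nbhd x.
  move=> fC vf /(edge_at fC) [y yN fE]; move: vf; rewrite fE in_set2 (negbTE vx).
  by move/eqP => vy; rewrite vy.
have cf f : f \in se C -> c \notin f.
  by move=> fC; apply: contra split_root_notin => /(subsetP (edge_subset fC)).
pose move_edge (f : {set T}) := if (x \in f) && (v \notin attached x Y) then [set c; v] else f.
have inj : {in [set f in se C | v \in f] &, injective move_edge}.
  move=> f f' /setIdP [fC vf] /setIdP [f'C vf']; rewrite /move_edge.
  case: (boolP (x \in f)) => xf; case: (boolP (x \in f')) => xf' //=; case: ifP => // _.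
  - by rewrite (edge_xv f fC vf xf).1 (edge_xv f' f'C vf' xf').1.
  - by move=> E; move: (split_root_notin_edge f'C); rewrite -E set21.
  - by move=> E; move: (split_root_notin_edge fC); rewrite E set21.
rewrite /deg -(card_in_imset inj); apply: card_le_deg => [|_ /imsetP [f /setIdP [_ vf] ->]].
  apply/subsetP => _ /imsetP [f /setIdP [fC vf] ->]; rewrite /move_edge !in_setU.
  case: (boolP (x \in f)) => xf /=; last by rewrite inE fC xf.
  have [fE vN] := edge_xv f fC vf xf.
  case: (boolP (v \in attached x Y)) => vY /=.
    by rewrite fE (imset_f (fun y => [set x; y]) vY) orbT.
  move: (nbhd_split vN); rewrite in_setU (negbTE vY) orbF => vX.
  by rewrite (imset_f (fun y => [set c; y]) vX) !orbT.
by rewrite /move_edge; case: ifP; rewrite ?set22.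
Qed.

Lemma split_mindeg3 : 1 < #|attached x X| -> 1 < #|attached x Y| -> mindeg3 split_graph.
Proof.
move=> hX hY v /setU1P [-> | vC].
- apply: leq_trans (card_le_deg (F := split_edgesX :|: [set [set x; c]]) _ _).
  + by rewrite cardsU_disjoint ?disjoint_split_edgesX // cards1 card_split_edgesX addn1.
  + by apply/subsetP => f fE; rewrite /= !in_setU; case/setUP: fE => ->; rewrite !orbT.
  + by move=> f /setUP [/imsetP [y _ ->] | /set1P ->]; rewrite ?set21 ?set22.
have [-> | vx] := eqVneq v x; last exact: leq_trans (mdC vC) (split_deg vC vx).
apply: leq_trans (card_le_deg (F := split_edgesY :|: [set [set x; c]]) _ _).
- by rewrite cardsU_disjoint ?disjoint_split_edgesY // cards1 card_split_edgesY addn1.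
- by apply/subsetP => f fE; rewrite /= !in_setU; case/setUP: fE => ->; rewrite !orbT.
- by move=> f /setUP [/imsetP [y _ ->] | /set1P ->]; rewrite set21.
Qed.

Lemma no_split : 1 < #|attached x X| -> 1 < #|attached x Y| -> False.
Proof.
move=> hX hY.
have := maxC (model_is_minor (minor_refl G) split_model) (split_mindeg3 hX hY).
rewrite card_split_graph.
have sizeC : #|se C| <= #|split_kept| + #|nbhd x|.
  apply: leq_trans (leq_add (leqnn _) (deg_le_nbhd x)).
  apply: leq_trans (leq_card_setU _ _).1; apply/subset_leq_card/subsetP => f fC.
  by rewrite in_setU !inE fC; case: (x \in f).
have sizeN : #|nbhd x| <= #|attached x X| + #|attached x Y|.
  apply: leq_trans (leq_card_setU _ _).1; apply/subset_leq_card/subsetP => y.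
  exact: nbhd_split.
lia.
Qed.

End Split.

Definition good_paths x r (q : T -> seq T) :=
  (forall y, y \in nbhd x ->
     [/\ path e r (q y), uniq (r :: q y), {subset q y <= B x} &
         exists2 z, z \in B y & e (last r (q y)) z]) /\
  (forall y y', y \in nbhd x -> y' \in nbhd x -> y != y' -> [disjoint q y & q y']).

Section Tree.
Variables (x : T) (par : T -> T) (h : T -> nat).
Hypotheses (xC : x \in sv C) (parx : par x = x) (tree : rooted_tree e (B x) x par h).
Local Notation Bx := (B x).

Lemma iter_par_in n w : w \in Bx -> iter n par w \in Bx /\ h (iter n par w) <= h w.
Proof.
move=> wB; elim: n => [// | n [iB ih]] /=.
have [E | nx] := eqVneq (iter n par w) x.
  by rewrite E parx; split; [exact: root_in_branch | rewrite -{1}E].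
by have [pB _ hl] := tree iB nx; split; last exact: leq_trans (ltnW hl) ih.
Qed.

Lemma fconnect_par_in w v : w \in Bx -> fconnect par w v -> v \in Bx /\ h v <= h w.
Proof. by move=> wB /iter_findex <-; apply: iter_par_in. Qed.

Lemma iter_par_root n : iter n par x = x.
Proof. by elim: n => //= n ->. Qed.

Lemma fconnect_root v : fconnect par x v -> v = x.
Proof. by move/iter_findex <-; rewrite iter_par_root. Qed.

Lemma fconnect_par w v : fconnect par w v -> w != v -> fconnect par (par w) v.
Proof.
move/iter_findex; case: (findex par w v) => [/= -> | k <-]; first by rewrite eqxx.
by rewrite iterSr => _; apply: fconnect_iter.
Qed.

Lemma fconnect_to_root w : w \in Bx -> fconnect par w x.
Proof.
suff iter_root n v : v \in Bx -> h v <= n -> iter n par v = x.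
  by move=> wB; rewrite -(iter_root (h w) w wB (leqnn _)) fconnect_iter.
elim: n v => [|n IH] v vB hv; have [-> | vx] := eqVneq v x.
- by [].
- by have [_ _] := tree vB vx; rewrite leqn0 in hv; rewrite (eqP hv) ltn0.
- exact: iter_par_root.
- have [pB _ hl] := tree vB vx; rewrite iterSr; apply: IH => //.
  by rewrite -ltnS (leq_trans hl hv).
Qed.

Lemma fconnect_total w v v' : fconnect par w v -> fconnect par w v' ->
  fconnect par v v' \/ fconnect par v' v.
Proof.
move=> /iter_findex Ev /iter_findex Ev'.
have [le | lt] := leqP (findex par w v) (findex par w v').
- by left; rewrite -Ev -Ev' -(subnK le) iterD fconnect_iter.
- by right; rewrite -Ev -Ev' -(subnK (ltnW lt)) iterD fconnect_iter.
Qed.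

Lemma fconnect_parent w v : fconnect par (par w) v -> fconnect par w v.
Proof. exact: connect_trans (fconnect1 _ _). Qed.

Definition subtree c := [set w in Bx | fconnect par w c].

Lemma subtree_neq_root c w : w \in subtree c -> w != c -> w != x.
Proof.
by case/setIdP => _ wc; apply: contraNneq => E; move: wc; rewrite E => /fconnect_root ->.
Qed.

Lemma subtree_sub c : subtree c \subset Bx.
Proof. by apply/subsetP => w /setIdP []. Qed.

Lemma subtree_self c : c \in Bx -> c \in subtree c.
Proof. by move=> cB; rewrite inE cB connect0. Qed.

Lemma subtree_root : subtree x = Bx.
Proof. by apply/setP => w; rewrite inE andb_idr // => /fconnect_to_root. Qed.

Lemma subtree_connected c : c \in Bx -> connected G (subtree c).
Proof.
move=> cB; apply: (rooted_tree_connected esym (par := par) (h := h) (subtree_self cB)).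
move=> w wS wnc; have wx := subtree_neq_root wS wnc.
case/setIdP: wS => wB wc; have [pB ep hl] := tree wB wx.
by rewrite inE pB fconnect_par.
Qed.

Lemma cosubtree_connected c : c \in Bx -> c != x -> connected G (Bx :\: subtree c).
Proof.
move=> cB cx; have xY : x \in Bx :\: subtree c.
  by rewrite in_setD root_in_branch // andbT; apply: contra cx => /setIdP [_ /fconnect_root ->].
apply: (rooted_tree_connected esym (par := par) (h := h) xY) => w /setDP [wB wS] wx.
have [pB ep hl] := tree wB wx; rewrite in_setD pB andbT; split => //.
by apply: contra wS => /setIdP [_ pc]; rewrite inE wB fconnect_parent.
Qed.

Lemma par_notin_subtree d : d \in Bx -> d != x -> par d \notin subtree d.
Proof.
move=> dB dx; have [pB _ hl] := tree dB dx.
by rewrite inE pB /=; apply/negP => /(fconnect_par_in pB) [_]; rewrite leqNgt hl.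
Qed.

Lemma subtree_par d : subtree d \subset subtree (par d).
Proof.
apply/subsetP => w /setIdP [wB wd]; rewrite inE wB.
exact: connect_trans wd (fconnect1 _ _).
Qed.

Lemma subtree_child c w : w \in subtree c -> w != c ->
  exists d, [/\ d \in Bx, d != x, par d = c & w \in subtree d].
Proof.
have [n] := ubnP (h w); elim: n w => // n IH w hw wS wnc.
have wx := subtree_neq_root wS wnc; case/setIdP: wS => wB wc.
have [pB ep hl] := tree wB wx.
have [pc | pnc] := eqVneq (par w) c; first by exists w; rewrite ?subtree_self.
have [||d [dB dx pd /setIdP [_ pd']]] := IH (par w) (leq_trans hl _) _ pnc.
- exact: hw.
- by rewrite inE pB fconnect_par.
by exists d; split => //; rewrite inE wB fconnect_parent.
Qed.

Lemma subtree_disjoint d d' : d \in Bx -> d != x -> d' \in Bx -> d' != x ->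
  par d = par d' -> d != d' -> [disjoint subtree d & subtree d'].
Proof.
move=> dB dx d'B d'x pdd' dd'.
rewrite -setI_eq0; apply/eqP/setP => w; rewrite !inE.
apply/negP => /andP [/andP [wB wd] /andP [_ wd']].
have [dd'c | d'dc] := fconnect_total wd wd'.
- move: (par_notin_subtree d'B d'x); rewrite inE -pdd' fconnect_par //.
  by have [-> _ _] := tree dB dx.
- move: (par_notin_subtree dB dx); rewrite inE pdd' fconnect_par // 1?eq_sym //.
  by have [-> _ _] := tree d'B d'x.
Qed.

Lemma exists_splitting_vertex : exists2 c, c \in Bx &
  [/\ 1 < #|attached x (subtree c)|,
      forall d, d \in Bx -> d != x -> par d = c -> #|attached x (subtree d)| <= 1 &
      c != x -> #|attached x (Bx :\: subtree c)| <= 1].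
Proof.
pose splitting c := (c \in Bx) && (1 < #|attached x (subtree c)|).
have sx : splitting x.
  rewrite /splitting root_in_branch // subtree_root attached_branch /=.
  exact: leq_trans (ltnW (mdC xC)) (deg_le_nbhd x).
have [c /andP [cB hc] cmin] := arg_minnP (fun c => #|subtree c|) sx.
exists c => //; split => // [d dB dx pd | cx].
  rewrite leqNgt; apply/negP => hd.
  have := cmin d; rewrite /splitting dB hd => /(_ isT); apply/negP; rewrite -ltnNge.
  apply: proper_card; apply/properP; split; first by rewrite -pd subtree_par.
  by exists c; rewrite ?subtree_self // -pd par_notin_subtree.
rewrite leqNgt; apply/negP => hY.
have xS : x \notin subtree c by apply: contra cx => /setIdP [_ /fconnect_root ->].
exact: no_split xC (subtree_sub c) xS (subtree_self cB) (subtree_connected cB)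
                (cosubtree_connected cB cx) hc hY.
Qed.

Definition region c (A : {set T}) :=
  (exists2 d, [/\ d \in Bx, d != x & par d = c] & A = subtree d) \/
  (c != x /\ A = Bx :\: subtree c).

Lemma region_sub c A : region c A -> A \subset Bx.
Proof. by case=> [[d _ ->] | [_ ->]]; rewrite ?subtree_sub ?subsetDl. Qed.

Lemma region_notin c A : c \in Bx -> region c A -> c \notin A.
Proof.
move=> cB [[d [dB dx <-] ->] | [_ ->]]; first exact: par_notin_subtree.
by rewrite in_setD subtree_self.
Qed.

Lemma region_connected c A : c \in Bx -> region c A -> connected G A.
Proof.
move=> cB [[d [dB _ _] ->] | [cx ->]]; first exact: subtree_connected.
exact: cosubtree_connected.
Qed.

Lemma regions_disjoint c A A' : region c A -> region c A' -> A != A' -> [disjoint A & A'].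
Proof.
have sub_co d : par d = c -> [disjoint subtree d & Bx :\: subtree c].
  move=> <-; apply: disjointWl (subtree_par d) _.
  by apply: (disjoint_by_pred (P := fun v => v \in subtree (par d))) => v // /setDP [].
case=> [[d [dB dx pd] ->] | [_ ->]] [[d' [d'B d'x pd'] ->] | [_ ->]] //; rewrite ?eqxx //.
- move=> dd'; apply: subtree_disjoint => //; first by rewrite pd pd'.
  by apply: contraNneq dd' => ->.
- by move=> _; apply: sub_co.
- by move=> _; rewrite disjoint_sym; apply: sub_co.
Qed.

Lemma region_entry c w : c \in Bx -> w \in Bx -> w != c ->
  exists A a, [/\ region c A, a \in A, w \in A & e c a].
Proof.
move=> cB wB wc; case: (boolP (w \in subtree c)) => wS.
- have [d [dB dx pd wd]] := subtree_child wS wc.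
  have [_ edc _] := tree dB dx.
  exists (subtree d), d; split; rewrite ?subtree_self //; first by left; exists d.
  by rewrite esym -pd.
- have cx : c != x by apply: contraNneq wS => ->; rewrite subtree_root.
  have [pB ecp _] := tree cB cx.
  exists (Bx :\: subtree c), (par c); split => //; first by right.
    by rewrite in_setD pB par_notin_subtree.
  by rewrite in_setD wS.
Qed.

Lemma path_to_nbhd c y : c \in Bx -> exists q, y \in nbhd x ->
  [/\ path e c q, uniq (c :: q), exists2 z, z \in B y & e (last c q) z &
      q = [::] \/ exists2 A, region c A & {subset q <= A} /\ y \in attached x A].
Proof.
move=> cB; case: (boolP (y \in nbhd x)) => yN; last by exists [::].
case: (boolP [exists z in B y, e c z]) => [/exists_inP [z zy ecz] | direct].
  by exists [::] => _; split => //; [exists z | left].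
move: (yN); rewrite -attached_branch => /setIdP [_ /exists_inP [w wB /exists_inP [z zy ewz]]].
have wc : w != c by apply: contraNneq direct => <-; apply/exists_inP; exists z.
have [A [a [RA aA wA eca]]] := region_entry cB wB wc.
have [p [pp lp up sp]] := connected_path esym (region_connected cB RA) aA wA.
have sap : {subset a :: p <= A} by move=> v /predU1P [-> | /sp].
exists (a :: p) => _; split.
- by rewrite /= eca.
- by rewrite cons_uniq up andbT; apply: contra (region_notin cB RA) => /sap.
- by exists z; rewrite //= lp.
- right; exists A => //; split => //; rewrite inE yN.
  by apply/exists_inP; exists w => //; apply/exists_inP; exists z.
Qed.

Lemma exists_good_paths : exists2 r, r \in Bx & exists q, good_paths x r q.
Proof.
have [c cB [_ child_small co_small]] := exists_splitting_vertex.
have small A : region c A -> #|attached x A| <= 1.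
  by case=> [[d [dB dx pd] ->] | [cx ->]]; [exact: child_small | exact: co_small].
have [q hq] := fin_all_exists (fun y => path_to_nbhd y cB).
exists c => //; exists q; split.
  move=> y yN; have [pq uq adj R] := hq y yN; split => // v.
  by case: R => [-> // | [A RA [sA _]] /sA]; apply: (subsetP (region_sub RA)).
move=> y y' yN y'N yy'.
have [_ _ _ [-> | [A RA [sA yA]]]] := hq y yN; first by rewrite disjoint_has.
have [_ _ _ [-> | [A' RA' [sA' y'A']]]] := hq y' y'N.
  by rewrite disjoint_sym disjoint_has.
apply: disjoint_seqS sA sA' (regions_disjoint RA RA' _).
apply: contraTneq (small A RA) => AA'; rewrite -ltnNge; apply/card_gt1P.
by exists y, y'; rewrite yA AA' y'A'.
Qed.

End Tree.

Lemma exists_rerooting : exists R Q,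
  forall x, x \in sv C -> R x \in B x /\ good_paths x (R x) (Q x).
Proof.
have /fin_all_exists [RQ hRQ] : forall x, exists rq : T * (T -> seq T),
    x \in sv C -> rq.1 \in B x /\ good_paths x rq.1 rq.2.
  move=> x; case: (boolP (x \in sv C)) => xC; last by exists (x, fun=> [::]).
  have [par [h [parx tree]]] :=
    connected_rooted_tree esym (model_connected MC xC) (root_in_branch xC).
  by have [r rB [q gq]] := exists_good_paths xC parx tree; exists (r, q).
by exists (fun x => (RQ x).1), (fun x => (RQ x).2).
Qed.

Section Rerooting.
Variables (R : T -> T) (Q : T -> T -> seq T).
Hypothesis RQ : forall x, x \in sv C -> R x \in B x /\ good_paths x (R x) (Q x).
Local Notation H := (image_graph R C).

Lemma reroot_label x : x \in sv C -> R x \in U /\ b (R x) = x.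
Proof. by case/RQ => /branchP. Qed.

Lemma reroot_inj : {in sv C &, injective R}.
Proof.
by move=> x y xC yC E; rewrite -(reroot_label xC).2 E (reroot_label yC).2.
Qed.

Lemma reroot_model : model G H U (fun w => R (b w)).
Proof.
split => //.
- exact: subsetT.
- by move=> w wU; rewrite imset_f ?(model_label MC).
- by move=> _ /imsetP [x xC ->]; have [xU ->] := reroot_label xC.
- move=> _ /imsetP [x xC ->].
  have -> : branch U (fun w => R (b w)) (R x) = B x.
    apply/setP => w; rewrite !mem_branch; case: (boolP (w \in U)) => //= wU.
    by apply/eqP/eqP => [E | ->]; first exact: reroot_inj (model_label MC wU) xC E.
  exact (model_connected MC xC).
- move=> _ /imsetP [F FC ->]; have [p [q [pC qC _ FE]]] := edge_ends FC.
  rewrite FE in FC *.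
  have [a [c [/branchP [aU ba] /branchP [cU bc] pq acG]]] := model_edge_branch MC FC.
  exists a, c; rewrite ba bc imsetU1 imset_set1; split => //.
  by apply: contra pq => /eqP /reroot_inj -> //; rewrite eqxx.
Qed.

Lemma reroot_minor3core : minor3core e H.
Proof.
split.
- exact: model_is_minor (minor_refl G) reroot_model.
- move=> _ /imsetP [x xC ->].
  exact: leq_trans (mdC xC) (deg_image_graph reroot_inj edge_subset x).
- move=> K mK mdK; rewrite card_image_graph ?maxC //.
    exact: reroot_inj.
  exact: edge_subset.
Qed.

Lemma reroot_nbhd x u : x \in sv C -> [set R x; u] \in se H ->
  exists2 y, y \in nbhd x & u = R y.
Proof.
move=> xC /imsetP [F FC E]; have [p [q [pC qC _ FE]]] := edge_ends FC.
move: E; rewrite FE imsetU1 imset_set1 => /set2_eq [[xp ->] | [xq ->]].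
- by exists q; rewrite // inE qC (reroot_inj xC pC xp) -FE.
- by exists p; rewrite // inE pC (reroot_inj xC qC xq) setUC -FE.
Qed.

Lemma reroot_tail x y : x \in sv C -> exists tl : seq T, y \in nbhd x ->
  [/\ path e (last (R x) (Q x y)) tl, last (last (R x) (Q x y)) tl = R y,
      uniq tl & {subset tl <= B y}].
Proof.
move=> xC; case: (boolP (y \in nbhd x)) => yN; last by exists [::].
have [_ [gp _]] := RQ xC; have [_ _ _ [z zB ez]] := gp y yN; have yC := nbhd_sv yN.
have [p [pp lp up sp]] := connected_path esym (model_connected MC yC) zB (RQ yC).1.
by exists (z :: p) => _; split => //= [|v /predU1P [-> | /sp]]; rewrite ?ez.
Qed.

Lemma reroot_disjoint_paths x : x \in sv C -> disjoint_paths_prop e H (R x).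
Proof.
move=> xC; have [RxB [gp gd]] := RQ xC; have [tl htl] := fin_all_exists (fun y => reroot_tail y xC).
have Bxy y : y \in nbhd x -> [disjoint B x & B y].
  by move/nbhd_neq; rewrite eq_sym; apply: branch_disjoint.
exists (fun u => Q x (b u) ++ tl (b u)); split.
  move=> u /(reroot_nbhd xC) [y yN ->]; rewrite (reroot_label (nbhd_sv yN)).2.
  have [pq uq sq _] := gp y yN; have [pt lt ut st] := htl y yN.
  rewrite cat_path pq last_cat lt -cat_cons cat_uniq uq ut andbT -disjoint_has.
  split=> //=; rewrite disjoint_sym.
  by apply: disjoint_seqS _ st (Bxy y yN) => v /predU1P [-> | /sq].
move=> u u' /(reroot_nbhd xC) [y yN ->] /(reroot_nbhd xC) [y' y'N ->] uu'.
rewrite (reroot_label (nbhd_sv yN)).2 (reroot_label (nbhd_sv y'N)).2.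
have yy' : y != y' by apply: contraNneq uu' => ->.
have [[_ _ sq _] [_ _ sq' _]] := (gp y yN, gp y' y'N).
have [[_ _ _ st] [_ _ _ st']] := (htl y yN, htl y' y'N).
rewrite disjoint_cat; apply/andP; split; rewrite disjoint_sym disjoint_cat; apply/andP; split.
- by apply: gd; rewrite // eq_sym.
- by apply: disjoint_seqS st' sq _; rewrite disjoint_sym Bxy.
- exact: disjoint_seqS sq' st (Bxy y yN).
- by apply: disjoint_seqS st' st (branch_disjoint _ _ _); rewrite eq_sym.
Qed.

End Rerooting.
End Core.

Unset Implicit Arguments.

Theorem lemma18 (T : finType) (e : rel T) (esym : symmetric e) (eirr : irreflexive e)
  (C : sgraph T) :
  minor3core e C ->
  exists H : sgraph T,
    [/\ minor3core e H, sg_iso C H &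
        forall v, v \in sv H -> disjoint_paths_prop e H v].
Proof.
case=> mC mdC maxC.
have [U [b MC]] := minor_model esym eirr mC.
have [R [Q RQ]] := exists_rerooting esym MC mdC maxC.
exists (image_graph R C); split.
- exact (reroot_minor3core MC mdC maxC RQ).
- exact: image_graph_iso (reroot_inj RQ).
- by move=> _ /imsetP [x xC ->]; exact (reroot_disjoint_paths esym MC RQ xC).
Qed.
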